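(* Let $T$ be a type distribution on $\mathcal{S}\subseteq\mathbb{N}$ with $q_k=\mathbb{P}(T=k)$, $C=(C^{\text{out}},C^{\text{in}})$ a colour distribution with $p_{ij}=\mathbb{P}(C^{\text{out}}=i,C^{\text{in}}=j)$, $I:\mathcal{S}\times\mathcal{C}^{\text{out}}\to\{0,1\}$, $J:\mathcal{S}\times\mathcal{C}^{\text{in}}\to\{0,1\}$, $\mu>0$, $\lambda_i=\sum_kq_kI(k,i)$, $\varrho_j=\sum_kq_kJ(k,j)$. Assume $\mathcal{S},\mathcal{C}^{\text{out}},\mathcal{C}^{\text{in}}\subseteq\mathbb{N}$, $\mathbb{E}[T^{1+\varepsilon}]<\infty$ for some $\varepsilon>0$, $\inf_i\{\lambda_i:\lambda_i>0\}>0$ and $\inf_j\{\varrho_j:\varrho_j>0\}>0$. Then the kernel $$\kappa(t,s)=\mu\sum_{i=1}^\infty\sum_{j=1}^\infty\frac{p_{ij}I(t,i)J(s,j)}{\lambda_i\varrho_j}$$ is bounded on $\mathcal{S}\times\mathcal{S}$. *)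

From HB Require Import structures.
From mathcomp Require Import all_boot all_order all_algebra.
From mathcomp Require Import all_classical all_reals all_analysis.
Set Implicit Arguments. Unset Strict Implicit. Unset Printing Implicit Defensive.
Import Order.TTheory GRing.Theory Num.Theory.
Local Open Scope ring_scope.
Local Open Scope ereal_scope.

Definition lam (R : realType) (q : nat -> R) (I : nat -> nat -> bool) (i : nat)
  : \bar R := \sum_(0 <= k <oo) (q k * (I k i)%:R)%:E.

Definition rho (R : realType) (q : nat -> R) (J : nat -> nat -> bool) (j : nat)
  : \bar R := \sum_(0 <= k <oo) (q k * (J k j)%:R)%:E.

(* kappa(t,s) = mu * sum_{i>=1} sum_{j>=1} p_ij I(t,i) J(s,j) / (lambda_i rho_j),
   a series of nonnegative terms, valued in the extended reals.
   Convention: x / 0 = 0 (MathComp's division). *)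
Definition kappa (R : realType) (mu : R) (q : nat -> R) (p : nat -> nat -> R)
  (I J : nat -> nat -> bool) (t s : nat) : \bar R :=
  mu%:E * \sum_(1 <= i <oo) \sum_(1 <= j <oo)
    ((p i j * (I t i)%:R * (J s j)%:R) / (fine (lam q I i) * fine (rho q J j)))%:E.

From HB Require Import structures.
From mathcomp Require Import all_boot all_order all_algebra.
From mathcomp Require Import all_classical all_reals all_analysis.
Import Order.TTheory GRing.Theory Num.Theory.
Local Open Scope ring_scope.

(* Every lambda_i is either 0 or at least c > 0, and every rho_j either 0 or
   at least d > 0.  Since a term of kappa with a vanishing denominator is 0,
   each term is at most p_ij / (c d), so kappa(t, s) <= mu / (c d) because the
   p_ij sum to 1. *)

Lemma divr_gapM_le (R : realFieldType) (x P a b c d : R) :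
  0 <= x <= P -> 0 < c -> 0 < d -> (a = 0 \/ c <= a) -> (b = 0 \/ d <= b) ->
  0 <= x / (a * b) <= P / (c * d).
Proof.
move=> /andP[x0 xP] c0 d0 ha hb.
have P0 : 0 <= P := le_trans x0 xP.
have cd0 : 0 < c * d by rewrite mulr_gt0.
case: ha => [->|ca]; first by rewrite mul0r invr0 mulr0 lexx divr_ge0 // ltW.
case: hb => [->|db]; first by rewrite mulr0 invr0 mulr0 lexx divr_ge0 // ltW.
have ab0 : 0 < a * b := mulr_gt0 (lt_le_trans c0 ca) (lt_le_trans d0 db).
apply/andP; split; first by rewrite divr_ge0 // ltW.
rewrite ler_pdivrMr // mulrAC ler_pdivlMr //.
by apply: ler_pM => //; [exact: ltW | apply: ler_pM => //; exact: ltW].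
Qed.

Lemma fine_eq0_or_ge (R : realDomainType) (x : \bar R) (c : R) :
  (0 <= x)%E -> ((0 < x)%E -> (c%:E <= x)%E) -> fine x = 0 \/ c <= fine x.
Proof.
case: x => [r| |] //= r0 hc; last by left.
have [->|r_neq0] := eqVneq r 0; first by left.
by right; rewrite -lee_fin; apply: hc; rewrite lte_fin lt_def r_neq0 -lee_fin.
Qed.

Lemma nneseries_start_le (R : realType) (f : nat -> \bar R) (m n : nat) :
  (m <= n)%N -> (forall k, (m <= k)%N -> (0 <= f k)%E) ->
  (\sum_(n <= k <oo) f k <= \sum_(m <= k <oo) f k)%E.
Proof.
move=> mn f0; rewrite (@nneseries_split _ f m (n - m)) // subnKC //.
rewrite leeDr // big_nat_cond; apply: sume_ge0 => k /andP[/andP[mk _] _].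
exact: f0.
Qed.

Lemma nneseries2_start_le (R : realType) (p : nat -> nat -> R) (m n : nat) :
  (m <= n)%N -> (forall i j, 0 <= p i j) ->
  (\sum_(n <= i <oo) \sum_(n <= j <oo) (p i j)%:E <=
   \sum_(m <= i <oo) \sum_(m <= j <oo) (p i j)%:E)%E.
Proof.
move=> mn p0; have pE0 i j : (0 <= (p i j)%:E)%E by rewrite lee_fin.
apply: (@le_trans _ _ (\sum_(n <= i <oo) \sum_(m <= j <oo) (p i j)%:E)%E).
  apply: lee_nneseries => [i _ _|i _]; first exact: nneseries_ge0.
  exact: nneseries_start_le.
by apply: nneseries_start_le => // i _; apply: nneseries_ge0.
Qed.

Section KappaTerm.
Variables (R : realType) (q : nat -> R) (p : nat -> nat -> R).
Variables (I J : nat -> nat -> bool) (c d : R).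
Hypothesis (q0 : forall k, 0 <= q k) (p0 : forall i j, 0 <= p i j).
Hypotheses (c0 : 0 < c) (d0 : 0 < d).
Hypothesis lam_gap : forall i, (0 < lam q I i)%E -> (c%:E <= lam q I i)%E.
Hypothesis rho_gap : forall j, (0 < rho q J j)%E -> (d%:E <= rho q J j)%E.

Lemma lam_ge0 i : (0 <= lam q I i)%E.
Proof. by apply: nneseries_ge0 => k _ _; rewrite lee_fin mulr_ge0. Qed.

Lemma rho_ge0 j : (0 <= rho q J j)%E.
Proof. by apply: nneseries_ge0 => k _ _; rewrite lee_fin mulr_ge0. Qed.

Lemma kappa_term_bound t s i j :
  0 <= p i j * (I t i)%:R * (J s j)%:R / (fine (lam q I i) * fine (rho q J j))
    <= p i j / (c * d).
Proof.
apply: divr_gapM_le => //.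
- by case: (I t i); case: (J s j); rewrite ?mulr1 ?mulr0 lexx p0.
- exact: fine_eq0_or_ge (lam_ge0 i) (@lam_gap i).
- exact: fine_eq0_or_ge (rho_ge0 j) (@rho_gap j).
Qed.

End KappaTerm.

Theorem lemma6 (R : realType)
  (S Cout Cin : set nat)
  (q : nat -> R) (p : nat -> nat -> R)
  (I J : nat -> nat -> bool) (mu : R)
  (* T is a random type with values in S, q_k = P(T = k) *)
  (hq0 : forall k, 0 <= q k)
  (hqS : forall k, ~ S k -> q k = 0)
  (hq1 : (\sum_(0 <= k <oo) (q k)%:E)%E = 1%E)
  (* C = (Cout, Cin) with values in Cout x Cin, p_ij = P(Cout = i, Cin = j) *)
  (hp0 : forall i j, 0 <= p i j)
  (hpC : forall i j, ~ (Cout i /\ Cin j) -> p i j = 0)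
  (hp1 : (\sum_(0 <= i <oo) \sum_(0 <= j <oo) (p i j)%:E)%E = 1%E)
  (hmu : 0 < mu)
  (* E[T^(1+eps)] < oo for some eps > 0 *)
  (hmom : exists2 eps : R, 0 < eps &
     (\sum_(0 <= k <oo) (q k * (k%:R `^ (1 + eps)))%:E < +oo)%E)
  (* inf { lambda_i : lambda_i > 0 } > 0 and inf { rho_j : rho_j > 0 } > 0 *)
  (hlam : exists2 c : R, 0 < c &
     forall i, (0 < lam q I i)%E -> (c%:E <= lam q I i)%E)
  (hrho : exists2 c : R, 0 < c &
     forall j, (0 < rho q J j)%E -> (c%:E <= rho q J j)%E) :
  exists M : R, forall t s, S t -> S s -> (kappa mu q p I J t s <= M%:E)%E.
Proof.
case: hlam => c c0 hc; case: hrho => d d0 hd.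
exists (mu * (c * d)^-1) => t s _ _.
have term_bound := @kappa_term_bound R q p I J c d hq0 hp0 c0 d0 hc hd t s.
have pE0 i j : (0 <= (p i j)%:E)%E by rewrite lee_fin.
rewrite /kappa EFinM lee_pmul2l ?lte_fin //.
apply: (@le_trans _ _ ((c * d)^-1%:E *
    \sum_(1 <= i <oo) \sum_(1 <= j <oo) (p i j)%:E)%E).
  rewrite -nneseriesZl; last by move=> i _; apply: nneseries_ge0.
  apply: lee_nneseries => [i _ _|i _].
    by apply: nneseries_ge0 => j _ _; rewrite lee_fin; case/andP: (term_bound i j).
  rewrite -nneseriesZl //; apply: lee_nneseries => [j _ _|j _].
    by rewrite lee_fin; case/andP: (term_bound i j).
  by rewrite -EFinM lee_fin [leRHS]mulrC; case/andP: (term_bound i j).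
rewrite -[leRHS]mule1 lee_pmul2l ?lte_fin ?invr_gt0 ?mulr_gt0 // -hp1.
exact: nneseries2_start_le.
Qed.
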